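(* For any $q\in(1/2,1)$ and integers $K\ge1$, $1\le C\le K/2$, we have $\lambda^*(q,K,C)>1-\frac{1}{2q}$. Moreover, for any fixed $q\in(1/2,1)$ and any $\overline{\lambda}>1-\frac{1}{2q}$, there exist $\underline{K},\underline{C}$ such that whenever $K\ge\underline{K}$ and $C\ge\underline{C}$ (with $C\le K/2$), we have $\lambda^*(q,K,C)\le\overline{\lambda}$.
   Context: For parameters $q\in(1/2,1)$, integers $K\ge1$, $1\le C\le K/2$, and $\lambda\in[0,1]$, let $P_k(x,\lambda)=\mathbb{P}[\mathrm{Binom}(K,\lambda x+(1-\lambda)q)=k]$ for $x\in[0,1]$, and define the majority-rule inflow accuracy function $$\phi_{\sigma^{\mathrm{maj}}}(x)=\frac{q+C\sum_{k>K/2}P_k(x,\lambda)+qC\,P_{K/2}(x,\lambda)}{1+C},$$ where the $P_{K/2}$ term is present only when $K$ is even. (This is the expected fraction of new popularity score going to correct stories when agents share $C$ stories of their size-$K$ news-feed majority, breaking ties by their own story, and post their own story of precision $q$.) The critical virality weight is $\lambda^*(q,K,C)=\inf\{\lambda\in[0,1]:\phi_{\sigma^{\mathrm{maj}}}(x)=x\text{ for some }x\in[0,1/2]\}$, with $\lambda^*=\infty$ if the set is empty. *)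

(* concrete reals R, with Coquelicot's Glb_Rbar for the infimum
   (Glb_Rbar of the empty set is p_infty, matching lambda^* = infinity). *)
From Stdlib Require Import Reals Lra Lia Arith.
From Coquelicot Require Import Coquelicot.
Open Scope R_scope.

Definition binom_pmf (K k : nat) (p : R) : R :=
  Binomial.C K k * p ^ k * (1 - p) ^ (K - k).

Definition Pk (q : R) (K k : nat) (x lam : R) : R :=
  binom_pmf K k (lam * x + (1 - lam) * q).

Definition maj_sum (q : R) (K : nat) (x lam : R) : R :=
  sum_f_R0 (fun k => if Nat.ltb K (2 * k) then Pk q K k x lam else 0) K.

Definition tie_term (q : R) (K Cn : nat) (x lam : R) : R :=
  if Nat.even K then q * INR Cn * Pk q K (Nat.div2 K) x lam else 0.

Definition phi_maj (q : R) (K Cn : nat) (lam x : R) : R :=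
  (q + INR Cn * maj_sum q K x lam + tie_term q K Cn x lam) / (1 + INR Cn).

Definition lambda_star (q : R) (K Cn : nat) : Rbar :=
  Glb_Rbar (fun lam => 0 <= lam <= 1 /\
              exists x, 0 <= x <= 1/2 /\ phi_maj q K Cn lam x = x).

(* At feed precision p >= 1/2 the majority of K draws is at least as likely to be
   correct as not, 2 P[X > K/2] + P[X = K/2] >= 1 (pair k with K - k), so the inflow
   accuracy exceeds 1/2 because q > 1/2; by continuity it still does for
   p >= 1/2 - eta.  As p = lam x + (1 - lam) q >= (1 - lam) q, there is no fixed point
   x <= 1/2 while (1 - lam) q >= 1/2 - eta, i.e. below 1 - 1/(2q) + eta/q.

   Conversely, for lam > 1 - 1/(2q) choose x0 <= 1/2 whose feed precision p0 is below
   1/2.  The Chernoff-type bound P[X >= K/2] <= ((1 + 4 p0 (1 - p0)) / 2)^K makes the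
   majority vote negligible for large K, and for large C so is the weight q/(1+C) of
   the agent's own story; hence phi(x0) < x0 while phi(0) > 0, and the intermediate
   value theorem yields a fixed point. *)

From Stdlib Require Import Reals Lra Lia Arith.
From Coquelicot Require Import Coquelicot.
Open Scope R_scope.

Lemma sum_f_R0_rev (f : nat -> R) (n : nat) :
  sum_f_R0 f n = sum_f_R0 (fun k => f (n - k)%nat) n.
Proof.
  revert f; induction n as [|n IH]; intros f; [reflexivity|].
  rewrite decomp_sum by lia; simpl pred.
  rewrite (IH (fun k => f (S k))), tech5, Nat.sub_diag, Rplus_comm.
  f_equal; apply sum_eq; intros k Hk; f_equal; lia.
Qed.

Lemma sum_f_R0_single (f : nat -> R) (m n : nat) : (m <= n)%nat ->
  sum_f_R0 (fun k => if Nat.eqb k m then f k else 0) n = f m.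
Proof.
  induction n as [|n IH]; intros Hm.
  - replace m with 0%nat by lia; reflexivity.
  - rewrite tech5; cbv beta.
    destruct (Nat.eqb_spec (S n) m) as [<-|Hne].
    + rewrite (sum_eq _ (fun _ => 0)), sum_cte; [ring|].
      intros k Hk; destruct (Nat.eqb_spec k (S n)); [lia|reflexivity].
    + rewrite IH by lia; ring.
Qed.

Lemma continuity_sum_f_R0 (f : nat -> R -> R) (n : nat) :
  (forall k, continuity (f k)) -> continuity (fun x => sum_f_R0 (fun k => f k x) n).
Proof.
  intros Hf; induction n as [|n IH]; simpl; [apply Hf|].
  now apply continuity_plus.
Qed.

Lemma continuity_pt_gt (f : R -> R) (x0 c : R) :
  continuity_pt f x0 -> c < f x0 ->
  exists eta, 0 < eta /\ forall x, Rabs (x - x0) < eta -> c < f x.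
Proof.
  intros Hf Hc.
  destruct (Hf (f x0 - c)) as [eta [Heta Hnear]]; [lra|].
  exists eta; split; [exact Heta|]; intros x Hx.
  destruct (Req_dec x x0) as [->|Hne]; [exact Hc|].
  assert (Hfx : Rabs (f x - f x0) < f x0 - c) by (apply Hnear; repeat split; auto).
  apply Rabs_def2 in Hfx; lra.
Qed.

Definition binom_lt_half (K : nat) (p : R) : R :=
  sum_f_R0 (fun k => if Nat.ltb (2 * k) K then binom_pmf K k p else 0) K.

Definition binom_eq_half (K : nat) (p : R) : R :=
  if Nat.even K then binom_pmf K (Nat.div2 K) p else 0.

Definition binom_gt_half (K : nat) (p : R) : R :=
  sum_f_R0 (fun k => if Nat.ltb K (2 * k) then binom_pmf K k p else 0) K.

Definition binom_ge_half (K : nat) (p : R) : R :=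
  sum_f_R0 (fun k => if Nat.leb K (2 * k) then binom_pmf K k p else 0) K.

Lemma continuity_binom_pmf (K k : nat) : continuity (binom_pmf K k).
Proof. unfold binom_pmf; reg. Qed.

Lemma binom_term_nonneg (n k i j : nat) (a b : R) : 0 <= a -> 0 <= b ->
  0 <= Binomial.C n k * a ^ i * b ^ j.
Proof.
  intros Ha Hb.
  assert (0 <= Binomial.C n k).
  { unfold Binomial.C; apply Rlt_le, Rdiv_lt_0_compat;
      [|apply Rmult_lt_0_compat]; apply INR_fact_lt_0. }
  apply Rmult_le_pos; [apply Rmult_le_pos|]; auto using pow_le.
Qed.

Lemma binom_pmf_nonneg (K k : nat) (p : R) : 0 <= p <= 1 -> 0 <= binom_pmf K k p.
Proof. intros Hp; apply binom_term_nonneg; lra. Qed.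

Lemma binom_pmf_sum (K : nat) (p : R) : sum_f_R0 (fun k => binom_pmf K k p) K = 1.
Proof.
  unfold binom_pmf; rewrite <- binomial.
  replace (p + (1 - p)) with 1 by ring; apply pow1.
Qed.

Lemma binom_eq_half_sum (K : nat) (p : R) :
  binom_eq_half K p = sum_f_R0 (fun k => if Nat.eqb (2 * k) K then binom_pmf K k p else 0) K.
Proof.
  unfold binom_eq_half; destruct (Nat.even K) eqn:Heven.
  - apply Nat.even_spec in Heven as [m ->]; rewrite Nat.div2_double.
    rewrite <- (sum_f_R0_single (fun k => binom_pmf (2 * m) k p) m (2 * m)) by lia.
    apply sum_eq; intros k _.
    destruct (Nat.eqb_spec (2 * k) (2 * m)), (Nat.eqb_spec k m); reflexivity || lia.
  - rewrite (sum_eq _ (fun _ => 0)), sum_cte; [ring|].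
    intros k _; destruct (Nat.eqb_spec (2 * k) K) as [<-|]; [|reflexivity].
    now rewrite Nat.even_even in Heven.
Qed.

Lemma binom_half_partition (K : nat) (p : R) :
  binom_lt_half K p + binom_eq_half K p + binom_gt_half K p = 1.
Proof.
  rewrite binom_eq_half_sum, <- (binom_pmf_sum K p).
  unfold binom_lt_half, binom_gt_half; rewrite <- !sum_plus.
  apply sum_eq; intros k _.
  destruct (Nat.ltb_spec (2 * k) K), (Nat.eqb_spec (2 * k) K), (Nat.ltb_spec K (2 * k));
    lia || ring.
Qed.

Lemma binom_gt_half_nonneg (K : nat) (p : R) : 0 <= p <= 1 -> 0 <= binom_gt_half K p.
Proof.
  intros Hp; apply cond_pos_sum; intros k.
  destruct (Nat.ltb K (2 * k)); [apply binom_pmf_nonneg; exact Hp | lra].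
Qed.

Lemma binom_eq_half_nonneg (K : nat) (p : R) : 0 <= p <= 1 -> 0 <= binom_eq_half K p.
Proof.
  intros Hp; unfold binom_eq_half.
  destruct (Nat.even K); [apply binom_pmf_nonneg; exact Hp | lra].
Qed.

Lemma binom_gt_half_le_ge_half (K : nat) (p : R) :
  0 <= p <= 1 -> binom_gt_half K p <= binom_ge_half K p.
Proof.
  intros Hp; apply sum_Rle; intros k _.
  destruct (Nat.ltb_spec K (2 * k)), (Nat.leb_spec K (2 * k)); try lia; try lra.
  now apply binom_pmf_nonneg.
Qed.

Lemma binom_eq_half_le_ge_half (K : nat) (p : R) :
  0 <= p <= 1 -> binom_eq_half K p <= binom_ge_half K p.
Proof.
  intros Hp; rewrite binom_eq_half_sum; apply sum_Rle; intros k _.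
  destruct (Nat.eqb_spec (2 * k) K), (Nat.leb_spec K (2 * k)); try lia; try lra.
  now apply binom_pmf_nonneg.
Qed.

Lemma binom_pmf_le_mirror (K k : nat) (p : R) : 1/2 <= p <= 1 -> (2 * k <= K)%nat ->
  binom_pmf K k p <= binom_pmf K (K - k) p.
Proof.
  intros Hp Hk; unfold binom_pmf.
  rewrite <- pascal_step1 by lia.
  replace (K - (K - k))%nat with k by lia.
  replace (K - k)%nat with (k + (K - 2 * k))%nat by lia.
  rewrite !pow_add.
  assert (0 <= Binomial.C K k * p ^ k * (1 - p) ^ k) by (apply binom_term_nonneg; lra).
  assert ((1 - p) ^ (K - 2 * k) <= p ^ (K - 2 * k)) by (apply pow_incr; lra).
  replace (Binomial.C K k * p ^ k * ((1 - p) ^ k * (1 - p) ^ (K - 2 * k)))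
    with (Binomial.C K k * p ^ k * (1 - p) ^ k * (1 - p) ^ (K - 2 * k)) by ring.
  replace (Binomial.C K k * (p ^ k * p ^ (K - 2 * k)) * (1 - p) ^ k)
    with (Binomial.C K k * p ^ k * (1 - p) ^ k * p ^ (K - 2 * k)) by ring.
  now apply Rmult_le_compat_l.
Qed.

Lemma binom_lt_half_le_gt_half (K : nat) (p : R) :
  1/2 <= p <= 1 -> binom_lt_half K p <= binom_gt_half K p.
Proof.
  intros Hp; unfold binom_lt_half, binom_gt_half.
  rewrite (sum_f_R0_rev (fun k => if Nat.ltb K (2 * k) then _ else 0)).
  apply sum_Rle; intros k Hk.
  destruct (Nat.ltb_spec (2 * k) K), (Nat.ltb_spec K (2 * (K - k))); try lia.
  - now apply binom_pmf_le_mirror; [|lia].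
  - lra.
Qed.

Lemma binom_gt_eq_half_ge_one (K : nat) (p : R) :
  1/2 <= p <= 1 -> 1 <= 2 * binom_gt_half K p + binom_eq_half K p.
Proof.
  intros Hp; pose proof (binom_half_partition K p).
  pose proof (binom_lt_half_le_gt_half K p Hp); lra.
Qed.

Lemma binom_pmf_ge_half_le (K k : nat) (p : R) : 0 <= p <= 1/2 -> (K <= 2 * k <= 2 * K)%nat ->
  binom_pmf K k p <= Binomial.C K k * (4 * p * (1 - p)) ^ (K - k) * (1/2) ^ K.
Proof.
  intros Hp Hk; unfold binom_pmf.
  set (j := (K - k)%nat); set (d := (2 * k - K)%nat).
  replace (p ^ k) with (p ^ j * p ^ d) by (rewrite <- pow_add; f_equal; lia).
  replace ((1/2) ^ K) with ((1/2) ^ j * (1/2) ^ j * (1/2) ^ d)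
    by (rewrite <- !pow_add; f_equal; lia).
  rewrite !Rpow_mult_distr.
  assert (Hquarter : 4 ^ j * (1/2) ^ j * (1/2) ^ j = 1).
  { rewrite <- !Rpow_mult_distr; replace (4 * (1/2) * (1/2)) with 1 by field; apply pow1. }
  assert (0 <= Binomial.C K k * p ^ j * (1 - p) ^ j) by (apply binom_term_nonneg; lra).
  assert (p ^ d <= (1/2) ^ d) by (apply pow_incr; lra).
  replace (Binomial.C K k * (p ^ j * p ^ d) * (1 - p) ^ j)
    with (Binomial.C K k * p ^ j * (1 - p) ^ j * p ^ d) by ring.
  replace (Binomial.C K k * (4 ^ j * p ^ j * (1 - p) ^ j) * ((1/2) ^ j * (1/2) ^ j * (1/2) ^ d))
    with (Binomial.C K k * p ^ j * (1 - p) ^ j * (1/2) ^ d * (4 ^ j * (1/2) ^ j * (1/2) ^ j))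
    by ring.
  rewrite Hquarter, Rmult_1_r; now apply Rmult_le_compat_l.
Qed.

Lemma binom_ge_half_le_pow (K : nat) (p : R) :
  0 <= p <= 1/2 -> binom_ge_half K p <= ((1 + 4 * p * (1 - p)) / 2) ^ K.
Proof.
  intros Hp; unfold binom_ge_half.
  replace (((1 + 4 * p * (1 - p)) / 2) ^ K)
    with (sum_f_R0 (fun k => Binomial.C K k * 1 ^ k * (4 * p * (1 - p)) ^ (K - k) * (1/2) ^ K) K).
  - apply sum_Rle; intros k Hk; rewrite pow1, Rmult_1_r.
    destruct (Nat.leb_spec K (2 * k)).
    + apply binom_pmf_ge_half_le; [exact Hp | lia].
    + apply binom_term_nonneg; nra.
  - rewrite <- scal_sum, <- binomial, Rmult_comm, <- Rpow_mult_distr.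
    f_equal; field.
Qed.

Lemma binom_ge_half_vanishes (p eps : R) : 0 <= p < 1/2 -> 0 < eps ->
  exists N, forall K, (N <= K)%nat -> binom_ge_half K p < eps.
Proof.
  intros Hp Heps; set (g := (1 + 4 * p * (1 - p)) / 2).
  assert (Hg : 0 <= g < 1) by (unfold g; nra).
  destruct (pow_lt_1_zero g ltac:(rewrite Rabs_right; lra) eps Heps) as [N HN].
  exists N; intros K HK.
  apply Rle_lt_trans with (g ^ K); [apply binom_ge_half_le_pow; lra|].
  eapply Rle_lt_trans; [apply Rle_abs | exact (HN K HK)].
Qed.

Definition inflow (q : R) (K Cn : nat) (p : R) : R :=
  (q + INR Cn * binom_gt_half K p + q * INR Cn * binom_eq_half K p) / (1 + INR Cn).

Lemma phi_maj_inflow (q : R) (K Cn : nat) (lam x : R) :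
  phi_maj q K Cn lam x = inflow q K Cn (lam * x + (1 - lam) * q).
Proof.
  unfold phi_maj, inflow, tie_term, binom_eq_half, maj_sum, binom_gt_half, Pk.
  destruct (Nat.even K); f_equal; ring.
Qed.

Lemma continuity_inflow (q : R) (K Cn : nat) : continuity (inflow q K Cn).
Proof.
  assert (continuity (binom_gt_half K)).
  { apply (continuity_sum_f_R0 (fun k p => if Nat.ltb K (2 * k) then binom_pmf K k p else 0)).
    intros k; destruct (Nat.ltb K (2 * k)); [apply continuity_binom_pmf | reg]. }
  assert (continuity (binom_eq_half K)).
  { unfold binom_eq_half; destruct (Nat.even K); [apply continuity_binom_pmf | reg]. }
  unfold inflow; reg.
Qed.

Lemma inflow_pos (q : R) (K Cn : nat) (p : R) : 0 < q -> 0 <= p <= 1 -> 0 < inflow q K Cn p.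
Proof.
  intros Hq Hp; unfold inflow; pose proof (pos_INR Cn).
  pose proof (binom_gt_half_nonneg K p Hp); pose proof (binom_eq_half_nonneg K p Hp).
  assert (0 <= INR Cn * binom_gt_half K p) by (apply Rmult_le_pos; lra).
  assert (0 <= q * INR Cn * binom_eq_half K p)
    by (apply Rmult_le_pos; [apply Rmult_le_pos|]; lra).
  apply Rdiv_lt_0_compat; lra.
Qed.

Lemma inflow_gt_half (q : R) (K Cn : nat) (p : R) :
  1/2 < q -> 1/2 <= p <= 1 -> 1/2 < inflow q K Cn p.
Proof.
  intros Hq Hp; unfold inflow; pose proof (pos_INR Cn).
  pose proof (binom_gt_eq_half_ge_one K p Hp).
  pose proof (binom_eq_half_nonneg K p ltac:(lra)).
  assert (1/2 <= binom_gt_half K p + q * binom_eq_half K p) by nra.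
  assert (INR Cn * (1/2) <= INR Cn * (binom_gt_half K p + q * binom_eq_half K p))
    by (apply Rmult_le_compat_l; lra).
  apply (Rlt_div_r (1/2)); nra.
Qed.

Lemma inflow_gt_half_near_half (q : R) (K Cn : nat) : 1/2 < q ->
  exists eta, 0 < eta /\ forall p, 1/2 - eta <= p <= 1 -> 1/2 < inflow q K Cn p.
Proof.
  intros Hq.
  destruct (continuity_pt_gt (inflow q K Cn) (1/2) (1/2)) as [eta [Heta Hnear]].
  - apply continuity_inflow.
  - apply inflow_gt_half; lra.
  - exists (eta / 2); split; [lra|]; intros p Hp.
    destruct (Rle_lt_dec (1/2) p).
    + apply inflow_gt_half; lra.
    + apply Hnear; rewrite Rabs_left; lra.
Qed.

Lemma inflow_lt_of_small_tail (q : R) (K Cn : nat) (p x : R) :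
  0 <= q <= 1 -> 0 <= p <= 1 -> 4 * binom_ge_half K p <= x -> 2 * q < INR Cn * x ->
  inflow q K Cn p < x.
Proof.
  intros Hq Hp Htail HCn; unfold inflow; pose proof (pos_INR Cn).
  pose proof (binom_gt_half_le_ge_half K p Hp); pose proof (binom_eq_half_le_ge_half K p Hp).
  pose proof (binom_gt_half_nonneg K p Hp); pose proof (binom_eq_half_nonneg K p Hp).
  set (t := binom_ge_half K p) in *.
  assert (INR Cn * binom_gt_half K p <= INR Cn * t) by (apply Rmult_le_compat_l; lra).
  assert (q * INR Cn * binom_eq_half K p <= INR Cn * t).
  { replace (INR Cn * t) with (1 * INR Cn * t) by ring.
    apply Rmult_le_compat; [| |apply Rmult_le_compat_r|]; nra. }
  assert (INR Cn * (4 * t) <= INR Cn * x) by (apply Rmult_le_compat_l; lra).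
  apply Rlt_div_l; lra.
Qed.

Lemma phi_maj_fixed_point (q : R) (K Cn : nat) (lam x0 : R) :
  0 < q <= 1 -> 0 <= lam <= 1 -> 0 < x0 <= 1 -> phi_maj q K Cn lam x0 < x0 ->
  exists x, 0 <= x <= x0 /\ phi_maj q K Cn lam x = x.
Proof.
  intros Hq Hlam Hx0 Hlt; rewrite phi_maj_inflow in Hlt.
  set (f := fun x => x - inflow q K Cn (lam * x + (1 - lam) * q)).
  assert (Hf : continuity f).
  { apply continuity_minus; [reg|].
    apply (continuity_comp (fun x => lam * x + (1 - lam) * q) (inflow q K Cn));
      [reg | apply continuity_inflow]. }
  assert (Hf0 : f 0 < 0).
  { assert (0 < inflow q K Cn (lam * 0 + (1 - lam) * q)) by (apply inflow_pos; nra).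
    unfold f; lra. }
  destruct (IVT f 0 x0 Hf) as [x [Hx Hfx]]; [lra | exact Hf0 | unfold f; lra |].
  exists x; split; [exact Hx|].
  rewrite phi_maj_inflow; unfold f in Hfx; lra.
Qed.

Lemma phi_maj_gt_below_threshold (q : R) (K Cn : nat) : 1/2 < q < 1 ->
  exists l, 1 - 1 / (2 * q) < l /\
    forall lam x, 0 <= lam <= 1 -> lam < l -> 0 <= x <= 1/2 -> x < phi_maj q K Cn lam x.
Proof.
  intros Hq.
  destruct (inflow_gt_half_near_half q K Cn ltac:(lra)) as [eta [Heta Hnear]].
  set (l := 1 - 1 / (2 * q) + eta / q).
  assert (Hl : (1 - l) * q = 1/2 - eta) by (unfold l; field; lra).
  exists l; split.
  - assert (0 < eta / q) by (apply Rdiv_lt_0_compat; lra); unfold l; lra.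
  - intros lam x Hlam Hlt Hx; rewrite phi_maj_inflow.
    apply Rle_lt_trans with (1/2); [lra|]; apply Hnear; split; nra.
Qed.

Lemma phi_maj_fixed_point_eventually (q lam : R) :
  1/2 < q < 1 -> 1 - 1 / (2 * q) < lam <= 1 ->
  exists Klow Clow : nat, forall K Cn, (Klow <= K)%nat -> (Clow <= Cn)%nat ->
    exists x, 0 <= x <= 1/2 /\ phi_maj q K Cn lam x = x.
Proof.
  intros Hq Hlam.
  assert (Hw : 1 / (2 * q) * q = 1/2) by (field; lra).
  assert (Hgap : 0 < 1/2 - (1 - lam) * q) by nra.
  (* feed precision at x0: midway between (1 - lam) q and 1/2 *)
  set (x0 := (1/2 - (1 - lam) * q) / (2 * lam)).
  assert (Hlam0 : 0 < lam) by nra.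
  assert (Hp0 : lam * x0 + (1 - lam) * q = (1/2 + (1 - lam) * q) / 2)
    by (unfold x0; field; lra).
  assert (Hx0 : 0 < x0 <= 1/2).
  { unfold x0; split; [apply Rdiv_lt_0_compat; lra|].
    apply Rle_div_l; [lra|]; nra. }
  assert (Hp : 0 <= lam * x0 + (1 - lam) * q < 1/2) by (rewrite Hp0; nra).
  destruct (binom_ge_half_vanishes _ (x0 / 4) Hp ltac:(lra)) as [Klow HK].
  destruct (INR_unbounded (2 * q / x0)) as [Clow HC].
  exists Klow, Clow; intros K Cn HKlow HClow.
  destruct (phi_maj_fixed_point q K Cn lam x0) as [x [Hx Hfix]]; [lra | lra | lra | |].
  - rewrite phi_maj_inflow; apply inflow_lt_of_small_tail; [lra | lra | |].
    + specialize (HK K HKlow); lra.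
    + assert (INR Clow <= INR Cn) by (apply le_INR; exact HClow).
      apply Rlt_div_l; lra.
  - exists x; split; [lra | exact Hfix].
Qed.

Theorem proposition5 :
  (forall (q : R) (K Cn : nat),
     1/2 < q < 1 -> (1 <= K)%nat -> (1 <= Cn)%nat -> (2 * Cn <= K)%nat ->
     Rbar_lt (Finite (1 - 1 / (2 * q))) (lambda_star q K Cn))
  /\
  (forall (q lbar : R),
     1/2 < q < 1 -> 1 - 1 / (2 * q) < lbar ->
     exists Klow Clow : nat,
       forall K Cn : nat,
         (Klow <= K)%nat -> (Clow <= Cn)%nat -> (1 <= Cn)%nat -> (2 * Cn <= K)%nat ->
         Rbar_le (lambda_star q K Cn) (Finite lbar)).
Proof.
  split.
  - intros q K Cn Hq _ _ _.
    destruct (phi_maj_gt_below_threshold q K Cn Hq) as [l [Hl Hbelow]].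
    apply Rbar_lt_le_trans with (Finite l); [exact Hl|].
    apply (proj2 (Glb_Rbar_correct _)); intros lam [Hlam [x [Hx Hfix]]]; simpl.
    destruct (Rlt_le_dec lam l) as [Hlt|]; [|assumption].
    specialize (Hbelow lam x Hlam Hlt Hx); lra.
  - intros q lbar Hq Hlbar.
    assert (Hthreshold : 0 < 1 / (2 * q) < 1).
    { split; [apply Rdiv_lt_0_compat | apply Rlt_div_l]; lra. }
    set (lam := Rmin lbar 1).
    assert (Hlam : 1 - 1 / (2 * q) < lam <= 1)
      by (split; [apply Rmin_glb_lt | apply Rmin_r]; lra).
    destruct (phi_maj_fixed_point_eventually q lam Hq Hlam) as [Klow [Clow Hfix]].
    exists Klow, Clow; intros K Cn HK HC _ _.
    apply Rbar_le_trans with (Finite lam); [|apply Rmin_l].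
    apply (proj1 (Glb_Rbar_correct _)); split; [lra | exact (Hfix K Cn HK HC)].
Qed.
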